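(* Let $X,Y$ be $d\times d$ complex matrices with $\|X\|_\infty+\|Y\|_\infty<\log2$. Let $M:=\max\{\|X\|_\infty,\|Y\|_\infty\}$ and $\varepsilon:=\|X+Y\|_F$. Then for every $r\ge1$, $$\|\mathrm{BCH}_r(X,Y)\|_F\le C_rM^{r-1}\varepsilon,\qquad C_r:=\frac{2^{2r-1}r^r}{r!}\le(4e)^r.$$
   Context: $\|A\|_F:=\sqrt{\operatorname{Tr}(A^\dagger A)/d}$ is the normalized Frobenius norm and $\|\cdot\|_\infty$ the operator norm. $\mathrm{BCH}_r(X,Y)$ is the degree-$r$ homogeneous term of the Baker–Campbell–Hausdorff series $\log(e^Xe^Y)=\sum_{r\ge1}\mathrm{BCH}_r(X,Y)$, given by Dynkin's formula $$\mathrm{BCH}_r(X,Y)=\sum_{n=1}^r\frac{(-1)^{n-1}}{n}\sum_{\substack{r_i,s_i\ge0,\ r_i+s_i>0\\ \sum_{i=1}^n(r_i+s_i)=r}}\frac{[X^{r_1}Y^{s_1}\cdots X^{r_n}Y^{s_n}]}{r\prod_{i=1}^n r_i!\,s_i!},$$ where $[Z_1Z_2\cdots Z_r]:=[Z_1,[Z_2,\dots,[Z_{r-1},Z_r]\dots]]$ is the left-normed commutator of the word consisting of $r_1$ copies of $X$, then $s_1$ copies of $Y$, etc. (with $[Z_1]:=Z_1$). *)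

From HB Require Import structures.
From mathcomp Require Import all_boot all_order all_algebra.
From mathcomp Require Import complex.
From mathcomp Require Import all_classical all_reals all_analysis.
Set Implicit Arguments. Unset Strict Implicit. Unset Printing Implicit Defensive.
Import Order.TTheory GRing.Theory Num.Theory.
Local Open Scope ring_scope.

Section BCHDefs.
Variable R : realType.
Local Notation C := (R[i]).

Definition cabs2 (z : C) : R := complex.Re z ^+ 2 + complex.Im z ^+ 2.

Definition vnorm d (v : 'cV[C]_d) : R :=
  Num.sqrt (\sum_(i < d) cabs2 (v i ord0)).

Definition opnorm d (A : 'M[C]_d) : R :=
  sup [set vnorm (A *m v) | v in [set v : 'cV[C]_d | vnorm v <= 1]]%classic.

(* normalized Frobenius norm ||A||_F = sqrt(Tr(A^dagger A)/d),
   with Tr(A^dagger A) = sum_{i,j} |A_ij|^2 *)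
Definition frobN d (A : 'M[C]_d) : R :=
  Num.sqrt ((\sum_(i < d) \sum_(j < d) cabs2 (A i j)) / d%:R).

Definition comm d (A B : 'M[C]_d) : 'M[C]_d := A *m B - B *m A.

(* left-normed commutator [Z1 Z2 ... Zr] := [Z1,[Z2,...,[Z_{r-1},Z_r]...]],
   [Z1] := Z1 (and the empty word gives 0, never used) *)
Fixpoint lnc d (s : seq 'M[C]_d) : 'M[C]_d :=
  match s with
  | [::] => 0
  | [:: z] => z
  | z :: s' => comm z (lnc s')
  end.

(* the word X^{r_1} Y^{s_1} ... X^{r_n} Y^{s_n}, for f i = (r_i, s_i) *)
Definition bch_word d r n (X Y : 'M[C]_d)
  (f : {ffun 'I_n -> 'I_r.+1 * 'I_r.+1}) : seq 'M[C]_d :=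
  flatten [seq nseq (f i).1 X ++ nseq (f i).2 Y | i <- enum 'I_n].

(* admissible exponent tuples: r_i + s_i > 0 and sum (r_i + s_i) = r
   (each r_i, s_i is then automatically <= r, so 'I_r.+1 loses nothing) *)
Definition bch_adm r n (f : {ffun 'I_n -> 'I_r.+1 * 'I_r.+1}) : bool :=
  [forall i, (0 < (f i).1 + (f i).2)%N] &&
  ((\sum_(i < n) ((f i).1 + (f i).2))%N == r).

(* Dynkin's formula for the degree-r homogeneous BCH term *)
Definition BCH d (r : nat) (X Y : 'M[C]_d) : 'M[C]_d :=
  \sum_(n < r.+1 | (0 < n)%N)
    \sum_(f : {ffun 'I_n -> 'I_r.+1 * 'I_r.+1} | bch_adm f)
      (((-1) ^+ n.-1 / n%:R) /
        (r%:R * \prod_(i < n) (((f i).1)`!%:R * ((f i).2)`!%:R)) : C)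
        *: lnc (bch_word X Y f).

Definition Cconst (r : nat) : R := (2 ^+ (2 * r).-1 * r%:R ^+ r) / (r`!)%:R.

End BCHDefs.

(* Each term of Dynkin's formula is a multiple of a nested commutator [Z_1 ... Z_r]
   of a word in X and Y. Substituting -X for the letters Y one at a time changes it
   by a nested commutator with one slot equal to X + Y, whose Frobenius norm is at
   most (2M)^(r-1) |X + Y|_F because |[A, S]|_F <= 2 |A|_oo |S|_F; for r >= 2 the
   final word only involves X and -X, so its nested commutator vanishes. Hence every
   word contributes at most r (2M)^(r-1) |X + Y|_F, and the moduli of the Dynkin
   coefficients sum to at most 2^r r^r / (r r!), since
   sum_f prod 1/(r_i! s_i!) <= (2n)^r / r!. *)

From HB Require Import structures.
From mathcomp Require Import all_boot all_order all_algebra.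
From mathcomp Require Import complex.
From mathcomp Require Import all_classical all_reals all_analysis.
From mathcomp Require Import ring lra.
Import Order.TTheory GRing.Theory Num.Theory.
Local Open Scope ring_scope.
Set Implicit Arguments. Unset Strict Implicit. Unset Printing Implicit Defensive.

Section CauchySchwarz.
Variable R : rcfType.

Lemma CauchySchwarz_sum (J : finType) (a b : J -> R) :
  \sum_j a j * b j <= Num.sqrt (\sum_j a j ^+ 2) * Num.sqrt (\sum_j b j ^+ 2).
Proof.
have sq_ge0 (c : J -> R) : 0 <= \sum_j c j ^+ 2 by apply: sumr_ge0 => j _; exact: sqr_ge0.
have [le0|gt0] := lerP (\sum_j a j * b j) 0.
  by apply: le_trans le0 _; rewrite mulr_ge0 ?sqrtr_ge0.
have rhs_ge0 : 0 <= Num.sqrt (\sum_j a j ^+ 2) * Num.sqrt (\sum_j b j ^+ 2).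
  by rewrite mulr_ge0 ?sqrtr_ge0.
rewrite -(ler_pXn2r (isT : 0 < 2)%N) ?nnegrE ?(ltW gt0) //.
rewrite exprMn !sqr_sqrtr ?sq_ge0 //.
pose A2B2 := \sum_i \sum_j a i ^+ 2 * b j ^+ 2.
have lagrange : \sum_i \sum_j (a i * b j - a j * b i) ^+ 2
    = A2B2 + A2B2 - 2 * \sum_i \sum_j a i * b i * (a j * b j).
  rewrite [in X in X + _ - _]/A2B2 /A2B2 [in X in _ + X - _]exchange_big.
  rewrite mulr_sumr -!big_split -sumrB /=.
  apply: eq_bigr => i _; rewrite mulr_sumr -!big_split -sumrB /=.
  by apply: eq_bigr => j _; ring.
have -> : (\sum_j a j ^+ 2) * (\sum_j b j ^+ 2) = A2B2.
  by rewrite mulr_suml; apply: eq_bigr => i _; rewrite mulr_sumr.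
have -> : (\sum_j a j * b j) ^+ 2 = \sum_i \sum_j a i * b i * (a j * b j).
  by rewrite expr2 mulr_suml; apply: eq_bigr => i _; rewrite mulr_sumr.
have : 0 <= \sum_i \sum_j (a i * b j - a j * b i) ^+ 2.
  by apply: sumr_ge0 => i _; exact: sq_ge0.
rewrite lagrange; lra.
Qed.

Lemma Minkowski_sum (J : finType) (a b : J -> R) :
  Num.sqrt (\sum_j (a j + b j) ^+ 2)
    <= Num.sqrt (\sum_j a j ^+ 2) + Num.sqrt (\sum_j b j ^+ 2).
Proof.
have sq_ge0 (c : J -> R) : 0 <= \sum_j c j ^+ 2 by apply: sumr_ge0 => j _; exact: sqr_ge0.
rewrite -(ler_pXn2r (isT : 0 < 2)%N) ?nnegrE ?addr_ge0 ?sqrtr_ge0 //.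
rewrite sqrrD !sqr_sqrtr ?sq_ge0 //.
have -> : \sum_j (a j + b j) ^+ 2
    = \sum_j a j ^+ 2 + \sum_j b j ^+ 2 + 2 * \sum_j a j * b j.
  by rewrite mulr_sumr -!big_split; apply: eq_bigr => j _ /=; ring.
have := CauchySchwarz_sum a b; lra.
Qed.

End CauchySchwarz.

Section ComplexModulus.
Variable R : realType.
Local Notation C := R[i].

Definition cabs (z : C) : R := Num.sqrt (cabs2 z).

Lemma cabs_norm (z : C) : (cabs z)%:C%C = `|z|.
Proof. by rewrite normc_def. Qed.

Lemma cabs2_ge0 (z : C) : 0 <= cabs2 z.
Proof. by rewrite addr_ge0 ?sqr_ge0. Qed.

Lemma sum_cabs2_ge0 (J : finType) (a : J -> C) : 0 <= \sum_j cabs2 (a j).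
Proof. by apply: sumr_ge0 => j _; exact: cabs2_ge0. Qed.

Lemma cabs_ge0 (z : C) : 0 <= cabs z.
Proof. exact: sqrtr_ge0. Qed.

Lemma cabs2E (z : C) : cabs2 z = cabs z ^+ 2.
Proof. by rewrite sqr_sqrtr ?cabs2_ge0. Qed.

Lemma cabs_real (x : R) : cabs x%:C%C = `|x|.
Proof. by rewrite /cabs /cabs2 /= expr0n addr0 sqrtr_sqr. Qed.

Lemma cabs0 : cabs 0 = 0.
Proof. by rewrite /cabs /cabs2 /= expr0n /= addr0 sqrtr0. Qed.

Lemma cabsM (x y : C) : cabs (x * y) = cabs x * cabs y.
Proof. by apply: complexI; rewrite rmorphM /= !cabs_norm normrM. Qed.

Lemma cabsD (x y : C) : cabs (x + y) <= cabs x + cabs y.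
Proof. by rewrite -lecR rmorphD /= !cabs_norm ler_normD. Qed.

Lemma cabs_sum (I : Type) (s : seq I) (P : pred I) (F : I -> C) :
  cabs (\sum_(i <- s | P i) F i) <= \sum_(i <- s | P i) cabs (F i).
Proof.
apply: (big_ind2 (fun z y => cabs z <= y)) => // [|x1 y1 x2 y2 le1 le2].
  by rewrite cabs0.
exact: le_trans (cabsD _ _) (lerD le1 le2).
Qed.

Lemma cabs2_conj (z : C) : cabs2 z^*%C = cabs2 z.
Proof. by case: z => a b; rewrite /cabs2 /= sqrrN. Qed.

Lemma cabs2_mulJ (z : C) : (cabs2 z)%:C%C = z * z^*%C.
Proof. by rewrite cabs2E rmorphXn /= cabs_norm normCK. Qed.

End ComplexModulus.

Section HilbertSchmidt.
Variable R : realType.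
Local Notation C := R[i].

Lemma cabs_sum_mul_le (J : finType) (a b : J -> C) :
  cabs (\sum_j a j * b j)
    <= Num.sqrt (\sum_j cabs2 (a j)) * Num.sqrt (\sum_j cabs2 (b j)).
Proof.
apply: le_trans (cabs_sum _ _ _) _; under eq_bigr do rewrite cabsM.
under [X in Num.sqrt X * _]eq_bigr do rewrite cabs2E.
under [X in _ * Num.sqrt X]eq_bigr do rewrite cabs2E.
exact: CauchySchwarz_sum.
Qed.

Definition hsnorm m n (A : 'M[C]_(m, n)) : R :=
  Num.sqrt (\sum_i \sum_j cabs2 (A i j)).

Lemma hsnorm_ge0 m n (A : 'M[C]_(m, n)) : 0 <= hsnorm A.
Proof. exact: sqrtr_ge0. Qed.

Lemma sqr_hsnorm m n (A : 'M[C]_(m, n)) : hsnorm A ^+ 2 = \sum_i \sum_j cabs2 (A i j).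
Proof. by rewrite sqr_sqrtr // sumr_ge0 // => i _; exact: sum_cabs2_ge0. Qed.

Lemma hsnorm_le m n (A : 'M[C]_(m, n)) c :
  0 <= c -> \sum_i \sum_j cabs2 (A i j) <= c ^+ 2 -> hsnorm A <= c.
Proof.
by move=> c_ge0 le_c; rewrite -(ler_pXn2r (isT : 0 < 2)%N) ?nnegrE ?hsnorm_ge0 ?sqr_hsnorm.
Qed.

Lemma hsnorm_pair m n (A : 'M[C]_(m, n)) :
  hsnorm A = Num.sqrt (\sum_(p : 'I_m * 'I_n) cabs (A p.1 p.2) ^+ 2).
Proof. by rewrite /hsnorm pair_big; under eq_bigr do rewrite cabs2E. Qed.

Lemma hsnormD m n (A B : 'M[C]_(m, n)) : hsnorm (A + B) <= hsnorm A + hsnorm B.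
Proof.
rewrite !hsnorm_pair; apply: le_trans (Minkowski_sum _ _); rewrite ler_wsqrtr //.
apply: ler_sum => p _; rewrite mxE lerXn2r ?nnegrE ?addr_ge0 ?cabs_ge0 //.
exact: cabsD.
Qed.

Lemma hsnormZ m n (c : C) (A : 'M[C]_(m, n)) : hsnorm (c *: A) = cabs c * hsnorm A.
Proof.
rewrite !hsnorm_pair; under eq_bigr do rewrite mxE cabsM exprMn.
by rewrite -mulr_sumr sqrtrM ?sqr_ge0 // sqrtr_sqr ger0_norm ?cabs_ge0.
Qed.

Lemma hsnormN m n (A : 'M[C]_(m, n)) : hsnorm (- A) = hsnorm A.
Proof. by rewrite -scaleN1r hsnormZ -(rmorphN1 (real_complex R)) cabs_real normrN1 mul1r. Qed.

Lemma hsnormB m n (A B : 'M[C]_(m, n)) : hsnorm (A - B) <= hsnorm A + hsnorm B.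
Proof. by rewrite -(hsnormN B) hsnormD. Qed.

Lemma hsnorm0 m n : hsnorm (0 : 'M[C]_(m, n)) = 0.
Proof. by rewrite -(scale0r 0) hsnormZ cabs0 mul0r. Qed.

Lemma hsnorm_sum m n (I : Type) (s : seq I) (P : pred I) (F : I -> 'M[C]_(m, n)) :
  hsnorm (\sum_(i <- s | P i) F i) <= \sum_(i <- s | P i) hsnorm (F i).
Proof.
apply: (big_ind2 (fun A x => hsnorm A <= x)) => // [|A1 x1 A2 x2 le1 le2].
  by rewrite hsnorm0.
exact: le_trans (hsnormD _ _) (lerD le1 le2).
Qed.

Lemma hsnorm_tr m n (A : 'M[C]_(m, n)) : hsnorm A^T = hsnorm A.
Proof. by rewrite /hsnorm exchange_big; under eq_bigr do under eq_bigr do rewrite mxE. Qed.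

Lemma hsnorm_conj m n (A : 'M[C]_(m, n)) : hsnorm (map_mx conjc A) = hsnorm A.
Proof. by rewrite /hsnorm; under eq_bigr do under eq_bigr do rewrite mxE cabs2_conj. Qed.

Lemma hsnorm_cV n (v : 'cV[C]_n) : hsnorm v = Num.sqrt (\sum_i cabs2 (v i 0)).
Proof. by rewrite /hsnorm; under eq_bigr do rewrite big_ord1. Qed.

Lemma sqr_hsnorm_col m n (A : 'M[C]_(m, n)) : hsnorm A ^+ 2 = \sum_j hsnorm (col j A) ^+ 2.
Proof.
rewrite sqr_hsnorm exchange_big; apply: eq_bigr => j _.
by rewrite hsnorm_cV sqr_sqrtr ?sum_cabs2_ge0 //; apply: eq_bigr => i _; rewrite mxE.
Qed.

Lemma hsnorm_mul_le m n p (A : 'M[C]_(m, n)) (B : 'M[C]_(n, p)) :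
  hsnorm (A *m B) <= hsnorm A * hsnorm B.
Proof.
apply: hsnorm_le; first by rewrite mulr_ge0 ?hsnorm_ge0.
rewrite exprMn !sqr_hsnorm [X in _ * X]exchange_big mulr_suml.
apply: ler_sum => i _; rewrite mulr_sumr; apply: ler_sum => j _; rewrite mxE.
rewrite cabs2E -(sqr_sqrtr (sum_cabs2_ge0 (A i))) -(sqr_sqrtr (sum_cabs2_ge0 (B^~ j))).
rewrite -exprMn lerXn2r ?nnegrE ?cabs_ge0 ?mulr_ge0 ?sqrtr_ge0 //.
exact: cabs_sum_mul_le.
Qed.

Lemma hsnorm_mul_col_le m n p (A : 'M[C]_(m, n)) (B : 'M[C]_(n, p)) c :
  0 <= c -> (forall u : 'cV[C]_n, hsnorm (A *m u) <= c * hsnorm u) ->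
  hsnorm (A *m B) <= c * hsnorm B.
Proof.
move=> c_ge0 leA; rewrite -(ler_pXn2r (isT : 0 < 2)%N) ?nnegrE ?mulr_ge0 ?hsnorm_ge0 //.
rewrite exprMn !sqr_hsnorm_col mulr_sumr; apply: ler_sum => j _.
rewrite -exprMn lerXn2r ?nnegrE ?mulr_ge0 ?hsnorm_ge0 //.
by rewrite colE -mulmxA -colE; exact: leA.
Qed.

End HilbertSchmidt.

Section OperatorNorm.
Variables (R : realType) (d : nat).
Local Notation C := R[i].
Local Notation M := 'M[C]_d.
Local Open Scope classical_set_scope.

Lemma vnorm_hsnorm (v : 'cV[C]_d) : vnorm v = hsnorm v.
Proof. by rewrite hsnorm_cV. Qed.

Lemma opnorm_has_ubound (A : M) :
  has_ubound [set vnorm (A *m v) | v in [set v : 'cV[C]_d | vnorm v <= 1]].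
Proof.
exists (hsnorm A) => _ [v /= v_le1 <-]; rewrite !vnorm_hsnorm in v_le1 *.
apply: le_trans (hsnorm_mul_le _ _) _.
by rewrite -[leRHS]mulr1 ler_wpM2l ?hsnorm_ge0.
Qed.

Lemma opnorm_ub (A : M) (v : 'cV[C]_d) : hsnorm (A *m v) <= opnorm A * hsnorm v.
Proof.
have [v0|v_neq0] := eqVneq (hsnorm v) 0.
  by have := hsnorm_mul_le A v; rewrite v0 !mulr0.
have v_gt0 : 0 < hsnorm v by rewrite lt0r v_neq0 hsnorm_ge0.
pose c : C := ((hsnorm v)^-1)%:C%C.
have cE : cabs c = (hsnorm v)^-1 by rewrite cabs_real ger0_norm // invr_ge0 ltW.
have : vnorm (A *m (c *: v)) <= opnorm A.
  apply: ub_le_sup; first exact: opnorm_has_ubound.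
  by exists (c *: v) => //=; rewrite vnorm_hsnorm hsnormZ cE mulVf.
by rewrite vnorm_hsnorm -scalemxAr hsnormZ cE ler_pdivrMl // mulrC.
Qed.

Lemma opnorm_ge0 (A : M) : 0 <= opnorm A.
Proof.
apply: le_trans (ub_le_sup (opnorm_has_ubound A) _).
  exact: (hsnorm_ge0 (A *m (0 : 'cV[C]_d))).
by exists 0; rewrite /= ?vnorm_hsnorm ?hsnorm0.
Qed.

Lemma opnorm_le (A : M) c :
  0 <= c -> (forall v : 'cV[C]_d, hsnorm (A *m v) <= c * hsnorm v) -> opnorm A <= c.
Proof.
move=> c_ge0 leA; apply: ge_sup.
  by exists (vnorm (A *m 0)), 0; rewrite //= vnorm_hsnorm hsnorm0.
move=> _ [v /= v_le1 <-]; rewrite !vnorm_hsnorm in v_le1 *.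
by apply: le_trans (leA v) _; rewrite -[leRHS]mulr1 ler_wpM2l.
Qed.

Lemma opnorm0 : opnorm (0 : M) = 0.
Proof.
apply/eqP; rewrite eq_le opnorm_ge0 andbT; apply: opnorm_le => // v.
by rewrite mul0mx hsnorm0 mul0r.
Qed.

Lemma opnormM (A B : M) : opnorm (A *m B) <= opnorm A * opnorm B.
Proof.
apply: opnorm_le => [|v]; first by rewrite mulr_ge0 ?opnorm_ge0.
rewrite -mulmxA -mulrA; apply: le_trans (opnorm_ub _ _) _.
by rewrite ler_wpM2l ?opnorm_ge0 ?opnorm_ub.
Qed.

Lemma opnormN (A : M) : opnorm (- A) = opnorm A.
Proof.
have le_opp (B : M) : opnorm (- B) <= opnorm B.
  by apply: opnorm_le => [|v]; rewrite ?opnorm_ge0 // mulNmx hsnormN opnorm_ub.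
by apply/eqP; rewrite eq_le le_opp -{1}(opprK A) le_opp.
Qed.

Lemma opnormB (A B : M) : opnorm (A - B) <= opnorm A + opnorm B.
Proof.
apply: opnorm_le => [|v]; first by rewrite addr_ge0 ?opnorm_ge0.
by rewrite mulmxBl mulrDl; apply: le_trans (hsnormB _ _) (lerD _ _); rewrite opnorm_ub.
Qed.

Lemma opnorm_comm (A B : M) : opnorm (comm A B) <= 2 * opnorm A * opnorm B.
Proof.
apply: le_trans (opnormB _ _) _; apply: le_trans (lerD (opnormM A B) (opnormM B A)) _.
by rewrite [opnorm B * _]mulrC -mulrA mulr_natl mulr2n.
Qed.

Lemma hsnorm_mull p (A : M) (B : 'M[C]_(d, p)) : hsnorm (A *m B) <= opnorm A * hsnorm B.
Proof. exact: hsnorm_mul_col_le (opnorm_ge0 A) (opnorm_ub A). Qed.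

(* |A^T u|^2 = <u, A conj(A^T u)> <= |u| |A|_oo |A^T u| by Cauchy-Schwarz. *)
Lemma hsnorm_trmx_mul (A : M) (u : 'cV[C]_d) : hsnorm (A^T *m u) <= opnorm A * hsnorm u.
Proof.
set w := A^T *m u; set z := A *m map_mx conjc w.
have wE : ((hsnorm w ^+ 2)%:C = \sum_i u i 0 * z i 0)%C.
  rewrite sqr_hsnorm rmorph_sum /=; under eq_bigr do rewrite big_ord1 cabs2_mulJ.
  under [RHS]eq_bigr do rewrite mxE mulr_sumr.
  rewrite exchange_big /=; apply: eq_bigr => k _; rewrite !mxE mulr_suml.
  by apply: eq_bigr => i _; rewrite !mxE mulrCA mulrA.
have le_uz : hsnorm w ^+ 2 <= hsnorm u * hsnorm z.
  rewrite -[leLHS]ger0_norm ?sqr_ge0 // -cabs_real wE !hsnorm_cV.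
  exact: cabs_sum_mul_le.
have le_z : hsnorm z <= opnorm A * hsnorm w by rewrite -(hsnorm_conj w) opnorm_ub.
have [w0|w_neq0] := eqVneq (hsnorm w) 0; first by rewrite w0 mulr_ge0 ?opnorm_ge0 ?hsnorm_ge0.
have w_gt0 : 0 < hsnorm w by rewrite lt0r w_neq0 hsnorm_ge0.
rewrite -(ler_pM2r w_gt0) -expr2 mulrAC; apply: le_trans le_uz _.
by rewrite mulrC ler_wpM2r ?hsnorm_ge0.
Qed.

Lemma hsnorm_mulr p (B : 'M[C]_(p, d)) (A : M) : hsnorm (B *m A) <= hsnorm B * opnorm A.
Proof.
rewrite -hsnorm_tr trmx_mul -(hsnorm_tr B) mulrC.
exact: hsnorm_mul_col_le (opnorm_ge0 A) (hsnorm_trmx_mul A).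
Qed.

Lemma hsnorm_comml (A S : M) : hsnorm (comm A S) <= 2 * opnorm A * hsnorm S.
Proof.
apply: le_trans (hsnormB _ _) _; apply: le_trans (lerD (hsnorm_mull A S) (hsnorm_mulr S A)) _.
by rewrite [hsnorm S * _]mulrC -mulrA mulr_natl mulr2n.
Qed.

Lemma hsnorm_commr (S A : M) : hsnorm (comm S A) <= 2 * hsnorm S * opnorm A.
Proof.
apply: le_trans (hsnormB _ _) _; apply: le_trans (lerD (hsnorm_mulr S A) (hsnorm_mull A S)) _.
by rewrite [opnorm A * _]mulrC -mulrA mulr_natl mulr2n.
Qed.

End OperatorNorm.

Section NestedCommutators.
Variables (R : realType) (d : nat).
Local Notation C := R[i].
Local Notation M := 'M[C]_d.

Lemma commBl (a b x : M) : comm (a - b) x = comm a x - comm b x.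
Proof. by rewrite /comm mulmxBl mulmxBr !opprB addrACA [RHS]addrACA [- _ + - _]addrC. Qed.

Lemma commBr (a x y : M) : comm a (x - y) = comm a x - comm a y.
Proof. by rewrite /comm mulmxBl mulmxBr !opprB addrACA [RHS]addrACA [- _ + - _]addrC. Qed.

Lemma lnc_cons2 (a b : M) s : lnc [:: a, b & s] = comm a (lnc (b :: s)).
Proof. by []. Qed.

Lemma opnorm_lnc (K : R) (s : seq M) :
  0 <= K -> {in s, forall z, opnorm z <= K} ->
  opnorm (lnc s) <= (2 * K) ^+ (size s).-1 * K.
Proof.
move=> K_ge0; elim: s => [|a s IH] Ks; first by rewrite opnorm0 mulr_ge0 ?exprn_ge0 ?mulr_ge0.
have Ka : opnorm a <= K by apply: Ks; rewrite mem_head.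
case: s => [|b s] in IH Ks *; first by rewrite expr0 mul1r.
have Ks' : {in b :: s, forall z, opnorm z <= K}.
  by move=> z z_s; apply: Ks; rewrite inE z_s orbT.
rewrite lnc_cons2; apply: le_trans (opnorm_comm _ _) _.
rewrite [size _]/= exprS -!mulrA ler_wpM2l // ler_pM ?opnorm_ge0 //.
exact: IH.
Qed.

Lemma hsnorm_lnc_sub_map (f : M -> M) (K e : R) (s : seq M) :
  0 <= K -> {in s, forall z, opnorm z <= K} -> {in s, forall z, opnorm (f z) <= K} ->
  {in s, forall z, hsnorm (z - f z) <= e} ->
  hsnorm (lnc s - lnc (map f s)) <= (size s)%:R * (2 * K) ^+ (size s).-1 * e.
Proof.
move=> K_ge0; elim: s => [|a s IH] Ks Kfs es; first by rewrite subrr hsnorm0 !mul0r.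
have ea : hsnorm (a - f a) <= e by apply: es; rewrite mem_head.
case: s => [|b s] in IH Ks Kfs es *; first by rewrite /= expr0 !mul1r.
have sub (P : M -> Prop) : {in [:: a, b & s], forall z, P z} -> {in b :: s, forall z, P z}.
  by move=> Ps z z_s; apply: Ps; rewrite inE z_s orbT.
have Kfa : opnorm (f a) <= K by apply: Kfs; rewrite mem_head.
set n := size s.
have IHs : hsnorm (lnc (b :: s) - lnc (map f (b :: s))) <= n.+1%:R * (2 * K) ^+ n * e.
  exact: IH (sub _ Ks) (sub _ Kfs) (sub _ es).
have opL : opnorm (lnc (b :: s)) <= (2 * K) ^+ n * K by apply: opnorm_lnc (sub _ Ks).
rewrite [map f _]/= !lnc_cons2 -[lnc (f b :: _)]/(lnc (map f (b :: s))).
(* [a, L] - [f a, L'] = [a - f a, L] + [f a, L - L'] *)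
rewrite -(subrKA (comm (f a) (lnc (b :: s)))) -commBl -commBr.
apply: le_trans (hsnormD _ _) _.
apply: le_trans (lerD (hsnorm_commr _ _) (hsnorm_comml _ _)) _.
have le1 : 2 * hsnorm (a - f a) * opnorm (lnc (b :: s)) <= 2 * e * ((2 * K) ^+ n * K).
  by rewrite -!mulrA ler_wpM2l // ler_pM ?hsnorm_ge0 ?opnorm_ge0.
have le2 : 2 * opnorm (f a) * hsnorm (lnc (b :: s) - lnc (map f (b :: s)))
    <= 2 * K * (n.+1%:R * (2 * K) ^+ n * e).
  by rewrite ler_pM ?mulr_ge0 ?opnorm_ge0 ?hsnorm_ge0 // ler_wpM2l.
suff -> : (size [:: a, b & s])%:R * (2 * K) ^+ (size [:: a, b & s]).-1 * e
    = 2 * e * ((2 * K) ^+ n * K) + 2 * K * (n.+1%:R * (2 * K) ^+ n * e).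
  exact: lerD le1 le2.
by rewrite [size _]/= -/n exprS -[n.+2]addn1 natrD; ring.
Qed.

Lemma lnc_eq0 (s : seq M) :
  {in s &, forall a b, comm a b = 0} -> (1 < size s)%N -> lnc s = 0.
Proof.
elim: s => [|a [|b s] IH] // comm_s _; rewrite lnc_cons2.
have comm_bs : {in b :: s &, forall x y, comm x y = 0}.
  by move=> x y x_s y_s; apply: comm_s; rewrite inE ?x_s ?y_s orbT.
case: s => [|c s] in IH comm_s comm_bs *; first by apply: comm_s; rewrite !inE eqxx ?orbT.
by rewrite IH // /comm mulmx0 mul0mx subrr.
Qed.

(* Substituting -X for Y gives a word in X, -X, whose nested commutator vanishes;
   each substitution costs |X + Y|_F. *)
Lemma hsnorm_lnc_word (X Y : M) (K : R) (s : seq M) :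
  opnorm X <= K -> opnorm Y <= K -> {in s, forall z, (z == X) || (z == Y)} ->
  (1 < size s)%N ->
  hsnorm (lnc s) <= (size s)%:R * (2 * K) ^+ (size s).-1 * hsnorm (X + Y).
Proof.
move=> KX KY s_XY s_gt1.
pose f z := if z == X then X else - X.
have fs0 : lnc (map f s) = 0.
  rewrite lnc_eq0 ?size_map // => _ _ /mapP [x _ ->] /mapP [y _ ->].
  by rewrite /f /comm; case: ifP; case: ifP; rewrite ?(mulmxN, mulNmx) subrr.
rewrite -[lnc s]subr0 -fs0; apply: hsnorm_lnc_sub_map => [|z|z|z].
- exact: le_trans (opnorm_ge0 X) KX.
- by move=> /s_XY /orP [] /eqP ->.
- by move=> _; rewrite /f; case: ifP; rewrite ?opnormN.
- rewrite /f; case: ifP => [/eqP -> _|zX /s_XY]; first by rewrite subrr hsnorm0 hsnorm_ge0.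
  by rewrite zX /= => /eqP ->; rewrite opprK addrC.
Qed.

End NestedCommutators.

Section Multinomial.
Variable R : numFieldType.

Definition texp (r : nat) : {poly R} := \sum_(a < r.+1) (a`!%:R)^-1 *: 'X^a.

Lemma natr_fact_neq0 k : (k`!%:R : R) != 0.
Proof. by rewrite pnatr_eq0 -lt0n fact_gt0. Qed.

Lemma coef_texp r k : (k <= r)%N -> (texp r)`_k = (k`!%:R)^-1.
Proof. by move=> le_kr; rewrite coef_sumMXn (big_pred1 (Ordinal (le_kr : k < r.+1)%N)). Qed.

Lemma coef_texpX r m k : (k <= r)%N -> (texp r ^+ m)`_k = m%:R ^+ k / k`!%:R.
Proof.
elim: m k => [|m IH] k le_kr.
  by rewrite expr0 coef1 expr0n; case: k {le_kr} => [|k]; rewrite ?fact0 ?invr1 ?mulr1 ?mul0r.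
rewrite exprSr coefM -[m.+1]add1n natrD exprDn mulr_suml; apply: eq_bigr => -[j /= lt_jk] _.
have le_jk : (j <= k)%N by [].
rewrite IH ?(leq_trans le_jk) // coef_texp ?(leq_trans (leq_subr _ _)) //.
rewrite -(bin_fact le_jk) !natrM expr1n mul1r -mulr_natr.
by field; rewrite !natr_fact_neq0 pnatr_eq0 -lt0n bin_gt0.
Qed.

Lemma texp_sqr r : texp r ^+ 2 = \sum_(p : 'I_r.+1 * 'I_r.+1)
   ((p.1`!%:R)^-1 * (p.2`!%:R)^-1) *: 'X^(p.1 + p.2).
Proof.
rewrite expr2 /texp big_distrl.
rewrite -(pair_bigA _ (fun a b : 'I_r.+1 => ((a`!%:R)^-1 * (b`!%:R)^-1) *: 'X^(a + b))).
apply: eq_bigr => a _.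
by rewrite big_distrr; apply: eq_bigr => b _; rewrite /= -scalerAl -scalerAr scalerA exprD.
Qed.

(* Without the constraint r_i + s_i > 0 the sum is the coefficient of x^r in
   texp r ^+ (2 n), that is (2n)^r/r!. *)
Lemma sum_bch_adm_le r n :
  \sum_(f : {ffun 'I_n -> 'I_r.+1 * 'I_r.+1} | bch_adm f)
     (\prod_(i < n) (((f i).1)`!%:R * ((f i).2)`!%:R))^-1
  <= (2 * n)%:R ^+ r / r`!%:R :> R.
Proof.
have coefE : (texp r ^+ (2 * n))`_r = \sum_(f : {ffun 'I_n -> 'I_r.+1 * 'I_r.+1} |
     (\sum_(i < n) ((f i).1 + (f i).2))%N == r)
     \prod_(i < n) ((((f i).1)`!%:R)^-1 * (((f i).2)`!%:R)^-1).
  rewrite exprM texp_sqr -[in X in X`_r](card_ord n) -prodr_const bigA_distr_bigA /=.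
  under eq_bigr do rewrite scaler_prod prodrXr.
  by rewrite coef_sumMXn.
rewrite coef_texpX // in coefE; rewrite coefE [leRHS]big_mkcond [leLHS]big_mkcond.
apply: ler_sum => f _; case/boolP: (bch_adm f) => [/andP [_ ->]|_].
  by rewrite -prodfV; under eq_bigr do rewrite invfM.
by case: ifP => // _; apply: prodr_ge0 => i _; rewrite mulr_ge0 // invr_ge0 ler0n.
Qed.

Lemma sum_inv_natr_le r : (0 < r)%N ->
  \sum_(n < r.+1 | (0 < n)%N) (n%:R^-1 * ((2 * n)%:R ^+ r / r`!%:R))
  <= 2 ^+ r * r%:R ^+ r / r`!%:R :> R.
Proof.
move=> r_gt0; have exprE (x : R) : x ^+ r = x * x ^+ r.-1 by rewrite -exprS prednK.
apply: (@le_trans _ _ (\sum_(n < r.+1 | (0 < n)%N) (2 ^+ r * r%:R ^+ r.-1 / r`!%:R))).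
  apply: ler_sum => -[n /= lt_nr] n_gt0.
  have n_neq0 : (n%:R : R) != 0 by rewrite pnatr_eq0 -lt0n.
  rewrite natrM exprMn (exprE n%:R) [leLHS](_ : _ = 2 ^+ r * n%:R ^+ r.-1 / r`!%:R); last first.
    by field; rewrite n_neq0 natr_fact_neq0.
  rewrite ler_wpM2r ?invr_ge0 ?ler0n // ler_wpM2l ?exprn_ge0 //.
  by rewrite lerXn2r ?nnegrE ?ler0n // ler_nat.
rewrite big_mkcond big_ord_recl /= add0r (eq_bigr (fun _ => 2 ^+ r * r%:R ^+ r.-1 / r`!%:R)) //.
rewrite sumr_const card_ord -[_ *+ r]mulr_natr (exprE r%:R).
by rewrite [leRHS](_ : _ = 2 ^+ r * r%:R ^+ r.-1 / r`!%:R * r%:R) //; ring.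
Qed.

End Multinomial.

Lemma Cconst_le (R : realType) r : (1 <= r)%N -> Cconst R r <= (4 * expR 1) ^+ r.
Proof.
move=> r_gt0; rewrite /Cconst exprMn -mulrA.
have le_pow2 : (2 : R) ^+ (2 * r).-1 <= 4 ^+ r.
  by rewrite [4](_ : _ = 2 ^+ 2 :> R) -?exprM ?ler_weXn2l ?leq_pred // ?ler1n // expr2 -natrM.
have le_exp : r%:R ^+ r / r`!%:R <= expR (1 : R) ^+ r.
  rewrite -expRM_natl mulr1.
  have := expR_ge1Dxn r.-1 (ler0n R r); rewrite prednK //; apply: le_trans.
  by rewrite lerDr.
by apply: ler_pM le_pow2 le_exp; rewrite ?exprn_ge0 ?mulr_ge0 ?invr_ge0 ?ler0n.
Qed.

Section BCHBound.
Variable R : realType.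
Local Notation C := R[i].

Lemma cabs_bch_coef r n (f : {ffun 'I_n -> 'I_r.+1 * 'I_r.+1}) :
  cabs (((-1) ^+ n.-1 / n%:R) / (r%:R * \prod_(i < n) (((f i).1)`!%:R * ((f i).2)`!%:R)) : C)
  = (n%:R * (r%:R * \prod_(i < n) (((f i).1)`!%:R * ((f i).2)`!%:R)))^-1.
Proof.
apply: complexI; rewrite cabs_norm !(normrM, normfV, normrX, normr_prod) normrN1 expr1n.
under eq_bigr do rewrite normrM !normr_nat.
rewrite !(fmorphV, rmorphM, rmorph_nat, rmorph_prod) /= !normr_nat.
under [in RHS]eq_bigr do rewrite rmorphM /= !rmorph_nat.
by rewrite mul1r !invfM.
Qed.

Lemma bch_word_mem d r n (X Y : 'M[C]_d) (f : {ffun 'I_n -> 'I_r.+1 * 'I_r.+1}) :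
  {in bch_word X Y f, forall z, (z == X) || (z == Y)}.
Proof.
move=> z /flattenP [_ /mapP [i _ ->]].
by rewrite mem_cat => /orP []; rewrite mem_nseq => /andP [_ ->]; rewrite ?orbT.
Qed.

Lemma size_bch_word d r n (X Y : 'M[C]_d) (f : {ffun 'I_n -> 'I_r.+1 * 'I_r.+1}) :
  size (bch_word X Y f) = (\sum_(i < n) ((f i).1 + (f i).2))%N.
Proof.
rewrite size_flatten /shape -map_comp sumnE big_map big_enum /=.
by apply: eq_bigr => i _; rewrite /= size_cat !size_nseq.
Qed.

Lemma sum_ord2_pair (V : nmodType) (G : 'I_2 * 'I_2 -> V) :
  \sum_p G p
    = G (ord0, ord0) + G (ord0, ord_max) + (G (ord_max, ord0) + G (ord_max, ord_max)).
Proof.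
rewrite [LHS](eq_bigr (fun p => G (p.1, p.2))); last by case.
rewrite -(pair_bigA _ (fun a b => G (a, b))) /= !big_ord_recl !big_ord0 !addr0.
by rewrite (_ : lift ord0 ord0 = ord_max); last exact: val_inj.
Qed.

Lemma bch_adm_ord1 (t : 'I_2 * 'I_2) :
  bch_adm ([ffun => t] : {ffun 'I_1 -> 'I_2 * 'I_2}) = ((t.1 + t.2)%N == 1%N).
Proof.
rewrite /bch_adm big_ord1 ffunE andbC; case: eqP => //= t1.
by apply/forallP => i; rewrite ffunE t1.
Qed.

Lemma BCH1 d (X Y : 'M[C]_d) : BCH 1 X Y = X + Y.
Proof.
rewrite /BCH big_mkcond big_ord_recl /= add0r big_ord1 /=.
rewrite (reindex (fun t : 'I_2 * 'I_2 => [ffun => t] : {ffun 'I_1 -> 'I_2 * 'I_2})); last first.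
  exists (fun f : {ffun 'I_1 -> 'I_2 * 'I_2} => f ord0) => [t _|f _]; first by rewrite ffunE.
  by apply/ffunP => i; rewrite ffunE (ord1 i).
rewrite big_mkcond sum_ord2_pair !bch_adm_ord1 /=.
rewrite /bch_word (_ : enum 'I_1 = [:: ord0]); last first.
  by apply: (inj_map val_inj); rewrite val_enum_ord.
rewrite /= !big_ord1 !ffunE /= (_ : 1`! = 1)%N // fact0 /bump /=.
by rewrite expr0 addn0 !mul1r invr1 !mulr1 !scale1r add0r addr0 addrC.
Qed.

Lemma hsnorm_BCH_le d (X Y : 'M[C]_d) r (K : R) :
  (1 < r)%N -> opnorm X <= K -> opnorm Y <= K ->
  hsnorm (BCH r X Y) <= 2 ^+ r * r%:R ^+ r / r`!%:R * ((2 * K) ^+ r.-1 * hsnorm (X + Y)).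
Proof.
move=> r_gt1 KX KY; set Z := (2 * K) ^+ r.-1 * hsnorm (X + Y).
have Z_ge0 : 0 <= Z.
  by rewrite mulr_ge0 ?hsnorm_ge0 ?exprn_ge0 ?mulr_ge0 ?(le_trans (opnorm_ge0 X) KX).
have r_neq0 : (r%:R : R) != 0 by rewrite pnatr_eq0 -lt0n ltnW.
pose P n (f : {ffun 'I_n -> 'I_r.+1 * 'I_r.+1}) : R :=
  \prod_(i < n) (((f i).1)`!%:R * ((f i).2)`!%:R).
have term_le n (f : {ffun 'I_n -> 'I_r.+1 * 'I_r.+1}) : (0 < n)%N -> bch_adm f ->
    hsnorm ((((-1) ^+ n.-1 / n%:R) / (r%:R * \prod_(i < n) (((f i).1)`!%:R * ((f i).2)`!%:R)) : C)
      *: lnc (bch_word X Y f)) <= n%:R^-1 * (P n f)^-1 * Z.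
  move=> n_gt0 /andP [_ /eqP size_w]; rewrite -(size_bch_word X Y) in size_w.
  have P_neq0 : P n f != 0 by apply/prodf_neq0 => i _; rewrite mulf_neq0 ?natr_fact_neq0.
  have P_ge0 : 0 <= P n f by apply: prodr_ge0 => i _; rewrite mulr_ge0 ?ler0n.
  have := hsnorm_lnc_word KX KY (@bch_word_mem _ _ _ X Y f).
  rewrite size_w => /(_ r_gt1) lnc_le.
  rewrite hsnormZ cabs_bch_coef -/(P n f).
  apply: le_trans (ler_wpM2l _ lnc_le) _; first by rewrite invr_ge0 !mulr_ge0 ?ler0n.
  rewrite -/Z [leRHS](_ : _ = (n%:R * (r%:R * P n f))^-1 * (r%:R * Z)) ?mulrA //.
  by field; rewrite P_neq0 r_neq0 pnatr_eq0 -lt0n n_gt0.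
rewrite /BCH; apply: le_trans (hsnorm_sum _ _ _) _.
apply: (@le_trans _ _ (\sum_(n < r.+1 | (0 < n)%N) (n%:R^-1 * ((2 * n)%:R ^+ r / r`!%:R)) * Z)).
  apply: ler_sum => n n_gt0; apply: le_trans (hsnorm_sum _ _ _) _.
  apply: le_trans (ler_sum _ (fun f adm => term_le n f n_gt0 adm)) _.
  rewrite -mulr_suml -mulr_sumr ler_wpM2r // ler_wpM2l ?invr_ge0 ?ler0n //.
  exact: sum_bch_adm_le.
by rewrite -mulr_suml ler_wpM2r // sum_inv_natr_le // ltnW.
Qed.

End BCHBound.

Lemma frobN_hsnorm (R : realType) d (A : 'M[R[i]]_d) :
  frobN A = hsnorm A * Num.sqrt (d%:R^-1).
Proof. by rewrite /frobN -sqrtrM // -sqr_hsnorm sqr_ge0. Qed.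

Lemma hsnorm_BCH_Cconst_le (R : realType) d (X Y : 'M[R[i]]_d) r (K : R) :
  (0 < r)%N -> opnorm X <= K -> opnorm Y <= K ->
  hsnorm (BCH r X Y) <= Cconst R r * K ^+ r.-1 * hsnorm (X + Y).
Proof.
case: r => [//|[|r]] _ KX KY.
  rewrite BCH1 /Cconst (_ : (2 * 1).-1 = 1)%N // (_ : 1`! = 1)%N // !expr1 expr0 invr1 !mulr1.
  by have := hsnorm_ge0 (X + Y); lra.
apply: le_trans (hsnorm_BCH_le _ KX KY) _ => //.
rewrite /Cconst (_ : (2 * r.+2).-1 = r.+2 + r.+1)%N; last by rewrite mul2n -addnn addnS.
by rewrite /= exprD exprMn [leRHS](_ : _ = 2 ^+ r.+2 * r.+2%:R ^+ r.+2 / r.+2`!%:R *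
  (2 ^+ r.+1 * K ^+ r.+1 * hsnorm (X + Y))) //; ring.
Qed.

Unset Implicit Arguments.

Theorem mainTheorem7 (R : realType) (d : nat) (X Y : 'M[R[i]]_d) :
  opnorm X + opnorm Y < ln 2 ->
  forall r : nat, (1 <= r)%N ->
    frobN (BCH r X Y) <=
      Cconst R r * Num.max (opnorm X) (opnorm Y) ^+ r.-1 * frobN (X + Y)
    /\ Cconst R r <= (4 * expR 1) ^+ r.
Proof.
move=> _ r r_gt0; split; last exact: Cconst_le.
rewrite !frobN_hsnorm mulrA ler_wpM2r ?sqrtr_ge0 //.
by apply: hsnorm_BCH_Cconst_le; rewrite // le_max lexx ?orbT.
Qed.
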